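(* Let $\mathcal{V}$ be a variety of groups such that every group in $\mathcal{V}$ is amenable and every relatively free group of $\mathcal{V}$ is right orderable. Then there exists a function $g\colon\mathbb{N}\to\mathbb{N}$ such that for every $Z\in\mathcal{V}$ and every $n$-element subset $U\subseteq Z$ there exists a finite nonempty set $F\subseteq Z$ with $|F|\leq g(n)$ and $|FU|\leq 2|F|$.
   Context: A group is right orderable if it admits a total order invariant under right multiplication. $FU=\{fu: f\in F, u\in U\}$. *)

From Stdlib Require Import Reals List.
Open Scope R_scope.

Record group := Group {
  carrier :> Type;
  gmul : carrier -> carrier -> carrier;
  gone : carrier;
  ginv : carrier -> carrier;
  gmulA : forall x y z, gmul x (gmul y z) = gmul (gmul x y) z;
  gmul1l : forall x, gmul gone x = x;
  gmulVl : forall x, gmul (ginv x) x = gone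
}.

(* Group words over an alphabet X: letters x^{+1} (true) / x^{-1} (false). *)
Definition word (X : Type) := list (X * bool).

Fixpoint eval (G : group) (X : Type) (a : X -> G) (w : word X) : G :=
  match w with
  | nil => gone G
  | (x, b) :: w' =>
      gmul G (if b then a x else ginv G (a x)) (eval G X a w')
  end.

Definition laws := word nat -> Prop.

Definition in_variety (V : laws) (G : group) : Prop :=
  forall w, V w -> forall a : nat -> G, eval G nat a w = gone G.

Definition amenable (G : group) : Prop :=
  exists m : (G -> Prop) -> R,
    m (fun _ => True) = 1 /\
    (forall A, 0 <= m A) /\
    (forall A B : G -> Prop, (forall x, A x -> B x -> False) ->
        m (fun x => A x \/ B x) = m A + m B) /\
    (forall (g : G) (A : G -> Prop),
        m (fun x => A (gmul G (ginv G g) x)) = m A).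

(* The relatively free group of V on the set X is the group of words over X
   modulo the relation "equal in every group of V under every assignment";
   multiplication is concatenation. *)
Definition relfree_eq (V : laws) (X : Type) (w1 w2 : word X) : Prop :=
  forall G : group, in_variety V G ->
    forall a : X -> G, eval G X a w1 = eval G X a w2.

Definition relfree_right_orderable (V : laws) (X : Type) : Prop :=
  exists lt : word X -> word X -> Prop,
    (forall w1 w1' w2 w2', relfree_eq V X w1 w1' -> relfree_eq V X w2 w2' ->
        lt w1 w2 -> lt w1' w2') /\
    (forall w, ~ lt w w) /\
    (forall w1 w2 w3, lt w1 w2 -> lt w2 w3 -> lt w1 w3) /\
    (forall w1 w2, relfree_eq V X w1 w2 \/ lt w1 w2 \/ lt w2 w1) /\
    (forall w1 w2 c, lt w1 w2 -> lt (w1 ++ c) (w2 ++ c)).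

(* The relatively free group R of V on generators x_0, x_1, ... is countable
   and lies in V, hence is amenable.  A countable amenable group G has, for
   every finite X, a finite nonempty F with |FX| <= 2|F|: otherwise Hall's
   marriage theorem for countable families of finite sets gives an injection
   G x {0,1} -> G moving each point g into gX, which is impossible for an
   invariant mean.  Let g(n) := |F_n| for such an F_n with X = {x_0, ..., x_{n-1}}.
   Given u_0, ..., u_{n-1} in Z, the homomorphism R -> Z with x_i |-> u_i
   pushes F_n forward, and summing over the level sets
   S_l = {s | at least l points of F_n map to s} gives
   sum_l |S_l U| <= |F_n X| <= 2 |F_n| = 2 sum_l |S_l|, so some nonempty S_l
   has |S_l U| <= 2|S_l| and |S_l| <= |F_n|. *)

From Pilot Require Import Defs.
From Stdlib Require Import Reals List.
From HB Require Import structures.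
From mathcomp Require Import ssreflect ssrbool.
From mathcomp Require all_boot zify boolp.
From Stdlib Require Import ClassicalEpsilon Lra.

Module VarietyFolner.
Import all_boot zify boolp.
Set Implicit Arguments. Unset Strict Implicit. Unset Printing Implicit Defensive.
Local Open Scope nat_scope.

HB.instance Definition _ (G : group) := gen_eqMixin (carrier G).

Local Notation "x *g y" := (gmul _ x y) (at level 40, left associativity).

Section GroupFacts.
Variable G : group.
Implicit Types x y z : G.

Lemma gmulVr x : x *g ginv G x = gone G.
Proof.
rewrite -[x *g _]gmul1l -{1}(gmulVl _ (ginv G x)).
by rewrite -gmulA (gmulA _ (ginv G x) x) gmulVl gmul1l gmulVl.
Qed.

Lemma gmul1r x : x *g gone G = x.
Proof. by rewrite -(gmulVl _ x) gmulA gmulVr gmul1l. Qed.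

Lemma gmulKl x y : ginv G x *g (x *g y) = y.
Proof. by rewrite gmulA gmulVl gmul1l. Qed.

Lemma gmulKr x y : (y *g x) *g ginv G x = y.
Proof. by rewrite -gmulA gmulVr gmul1r. Qed.

Lemma gmulVKr x y : (y *g ginv G x) *g x = y.
Proof. by rewrite -gmulA gmulVl gmul1r. Qed.

Lemma gmulIl x : injective (gmul G x).
Proof. by move=> y z e; rewrite -(gmulKl x y) e gmulKl. Qed.

Lemma gmulIr x : injective (gmul G ^~ x).
Proof. by move=> y z e; rewrite -(gmulKr x y) /= e gmulKr. Qed.

Lemma ginv_uniq x y : x *g y = gone G -> ginv G x = y.
Proof. by move=> H; rewrite -[ginv G x]gmul1r -H gmulA gmulVl gmul1l. Qed.

Lemma ginvK x : ginv G (ginv G x) = x.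
Proof. by apply: ginv_uniq; rewrite gmulVl. Qed.

Lemma ginvM x y : ginv G (x *g y) = ginv G y *g ginv G x.
Proof. by apply: ginv_uniq; rewrite -gmulA (gmulA _ y) gmulVr gmul1l gmulVr. Qed.

End GroupFacts.

(** * Relatively free groups *)

Lemma eval_cat (G : group) (X : Type) (a : X -> G) (w1 w2 : word X) :
  eval G X a (w1 ++ w2) = eval G X a w1 *g eval G X a w2.
Proof. by elim: w1 => [|[x b] w IH] /=; rewrite ?gmul1l // IH gmulA. Qed.

Definition winv (X : Type) (w : word X) : word X :=
  rev (map (fun p => (p.1, ~~ p.2)) w).

Lemma eval_winv (G : group) (X : Type) (a : X -> G) (w : word X) :
  eval G X a (winv w) = ginv G (eval G X a w).
Proof.
elim: w => [|[x b] w IH] /=.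
  by apply/esym/ginv_uniq; rewrite gmul1l.
rewrite /winv map_cons rev_cons -cats1 eval_cat -/(winv w) IH ginvM /= gmul1r.
by case: b => //=; rewrite ginvK.
Qed.

(* The relatively free group on countably many generators is realised as the
   set of [relfree_eq]-classes of words, each class seen as a predicate. *)
Section RelativelyFree.
Variable V : laws.

Local Notation weq := (relfree_eq V nat).

Lemma weq_sym w1 w2 : weq w1 w2 -> weq w2 w1.
Proof. by move=> H G HG a; rewrite H. Qed.

Lemma weq_trans w1 w2 w3 : weq w1 w2 -> weq w2 w3 -> weq w1 w3.
Proof. by move=> H1 H2 G HG a; rewrite H1 // H2. Qed.

Definition rfree := {P : word nat -> Prop | exists w, P = weq w}.

Definition rclass (w : word nat) : rfree := exist _ (weq w) (ex_intro _ w erefl).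

Lemma rclass_eq w1 w2 : weq w1 w2 -> rclass w1 = rclass w2.
Proof.
move=> H; apply: eq_exist; apply: funext => w; apply: propext.
by split; apply: weq_trans; [apply: weq_sym|].
Qed.

Definition rrep (c : rfree) : word nat := projT1 (cid (proj2_sig c)).

Lemma rrepK c : rclass (rrep c) = c.
Proof.
rewrite /rrep; case: (cid _) => w Hw /=.
by case: c Hw => P HP /= Hw; apply: eq_exist.
Qed.

Lemma rrep_rclass w : weq (rrep (rclass w)) w.
Proof.
have /(congr1 (@proj1_sig _ _)) /= -> := rrepK (rclass w).
by move=> G HG a.
Qed.

Lemma eval_rrep (G : group) (a : nat -> G) w : in_variety V G ->
  eval G nat a (rrep (rclass w)) = eval G nat a w.
Proof. by move=> HG; apply: rrep_rclass. Qed.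

Definition rmul (c d : rfree) : rfree := rclass (rrep c ++ rrep d).
Definition rone : rfree := rclass [::].
Definition rinv (c : rfree) : rfree := rclass (winv (rrep c)).

Lemma rmulA c d e : rmul c (rmul d e) = rmul (rmul c d) e.
Proof. by apply: rclass_eq => G HG a; rewrite !eval_cat !eval_rrep // !eval_cat gmulA. Qed.

Lemma rmul1 c : rmul rone c = c.
Proof.
rewrite -[in RHS](rrepK c); apply: rclass_eq => G HG a.
by rewrite !eval_cat !eval_rrep //= gmul1l.
Qed.

Lemma rmulV c : rmul (rinv c) c = rone.
Proof. by apply: rclass_eq => G HG a; rewrite !eval_cat !eval_rrep // eval_winv gmulVl. Qed.

Definition relfree_group : group := Defs.Group rfree rmul rone rinv rmulA rmul1 rmulV.

Definition subst_word (a : nat -> rfree) (w : word nat) : word nat :=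
  flatten (map (fun p => if p.2 then rrep (a p.1) else winv (rrep (a p.1))) w).

Lemma eval_relfree (a : nat -> relfree_group) w :
  eval relfree_group nat a w = rclass (subst_word a w).
Proof.
elim: w => [|[x b] w IH] //=.
rewrite IH /subst_word /= -/(subst_word a w); apply: rclass_eq => G HG c.
by rewrite !eval_cat eval_rrep //; case: b => //=; rewrite eval_rrep.
Qed.

Lemma eval_subst_word (G : group) (c : nat -> G) (a : nat -> rfree) w :
  eval G nat c (subst_word a w) = eval G nat (fun i => eval G nat c (rrep (a i))) w.
Proof.
elim: w => [|[x b] w IH] //=.
by rewrite eval_cat -/(subst_word a w) IH; case: b => //=; rewrite eval_winv.
Qed.

Lemma relfree_in_variety : in_variety V relfree_group.
Proof.
move=> w Hw a; rewrite eval_relfree; apply: rclass_eq => G HG c.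
by rewrite eval_subst_word HG.
Qed.

Definition relfree_gen (i : nat) : relfree_group := rclass [:: (i, true)].

Lemma relfree_countable : exists e : nat -> relfree_group, forall c, exists k, e k = c.
Proof.
exists (fun k => if @unpickle (word nat) k is Some w then rclass w else rone).
by move=> c; exists (pickle (rrep c)); rewrite pickleK rrepK.
Qed.

Section Lift.
Variables (Z : group) (HZ : in_variety V Z) (u : nat -> Z).

Definition relfree_lift (c : relfree_group) : Z := eval Z nat u (rrep c).

Lemma relfree_liftM c d : relfree_lift (c *g d) = relfree_lift c *g relfree_lift d.
Proof. by rewrite /relfree_lift /= /rmul eval_rrep // eval_cat. Qed.

Lemma relfree_lift_gen i : relfree_lift (relfree_gen i) = u i.
Proof. by rewrite /relfree_lift eval_rrep //= gmul1r. Qed.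

End Lift.
End RelativelyFree.

(** * Hall's theorem for countable families of finite sets *)

Lemma size_undup_cat (T : eqType) (s1 s2 : seq T) : uniq s1 -> uniq s2 ->
  size (undup (s1 ++ s2)) + size [seq x <- s1 | x \in s2] = size s1 + size s2.
Proof.
move=> u1 u2; rewrite undup_cat (undup_id u2) size_cat (undup_id u1).
have := count_predC (fun x => x \in s2) s1; rewrite !size_filter.
have -> : count (predC (fun x => x \in s2)) s1 = count (fun x => x \notin s2) s1 by [].
lia.
Qed.

Lemma uniq_map_snd_inj (A B : eqType) (s : seq (A * B)) v v' w :
  uniq (map snd s) -> (v, w) \in s -> (v', w) \in s -> v = v'.
Proof.
elim: s => [|[a b] s IH] //= /andP[nb us].
have nbs x : (x, w) \in s -> w != b.
  by move=> xw; apply: contraNneq nb => <-; apply: (map_f snd xw).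
rewrite !in_cons !xpair_eqE.
case/orP=> [/andP[/eqP-> /eqP wb]|h1]; case/orP=> [/andP[/eqP-> /eqP w'b]|h2] //.
- by case/eqP: (nbs _ h2).
- by case/eqP: (nbs _ h1).
- exact: IH.
Qed.

Section CountableHall.
Variables (A B : eqType) (N : A -> seq B).
Implicit Types (st : seq (A * B)) (L : seq A).

(* A partial matching [st] is a list of pairs (vertex, chosen neighbour). *)
Definition avail st L := undup [seq w <- flatten (map N L) | w \notin map snd st].
Definition unmatched st L := all (fun v => v \notin map fst st) L.
Definition residual_hall st :=
  forall L, uniq L -> unmatched st L -> size L <= size (avail st L).
Definition tight st L := size (avail st L) = size L.
Definition blocker st v L := [/\ uniq L, unmatched st L, v \notin L & tight st L].

Lemma mem_avail st L w :
  (w \in avail st L) = (w \notin map snd st) && has (fun v => w \in N v) L.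
Proof.
rewrite mem_undup mem_filter; congr (_ && _).
apply/flattenP/hasP => [[s /mapP[v vL ->] wN]|[v vL wN]]; first by exists v.
by exists (N v) => //; apply: map_f.
Qed.

Lemma unmatched_cat st L1 L2 :
  unmatched st (L1 ++ L2) = unmatched st L1 && unmatched st L2.
Proof. exact: all_cat. Qed.

Lemma unmatched_undup st L : unmatched st (undup L) = unmatched st L.
Proof. by apply: eq_all_r => v; rewrite mem_undup. Qed.

Lemma tight_union st L1 L2 : residual_hall st -> uniq L1 -> uniq L2 ->
  unmatched st L1 -> unmatched st L2 -> tight st L1 -> tight st L2 ->
  tight st (undup (L1 ++ L2)).
Proof.
move=> hst u1 u2 a1 a2 c1 c2.
have aU : unmatched st (undup (L1 ++ L2)) by rewrite unmatched_undup unmatched_cat a1.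
have aI : unmatched st [seq x <- L1 | x \in L2]
  by apply/allP => v; rewrite mem_filter => /andP[_ /(allP a1)].
have gU := hst _ (undup_uniq _) aU.
have gI := hst _ (filter_uniq _ u1) aI.
have sL := size_undup_cat u1 u2.
have sA := size_undup_cat (undup_uniq [seq w <- flatten (map N L1) | w \notin map snd st])
  (undup_uniq [seq w <- flatten (map N L2) | w \notin map snd st]).
have e1 : size (avail st (undup (L1 ++ L2))) = size (undup (avail st L1 ++ avail st L2)).
  apply: perm_size; apply: uniq_perm; try exact: undup_uniq.
  move=> w; rewrite mem_undup mem_cat !mem_avail -andb_orr has_undup has_cat.
  by rewrite -!/(avail st _).
have e2 : size (avail st [seq x <- L1 | x \in L2]) <=
          size [seq x <- avail st L1 | x \in avail st L2].
  apply: uniq_leq_size; first exact: undup_uniq.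
  move=> w; rewrite mem_filter !mem_avail => /andP[nw /hasP[v]].
  rewrite mem_filter => /andP[vL2 vL1] wN.
  by rewrite nw /=; apply/andP; split; apply/hasP; exists v.
move: c1 c2 gU gI e1 e2; rewrite /tight /avail; lia.
Qed.

Lemma blocked_tight st v w : residual_hall st -> ~ residual_hall ((v, w) :: st) ->
  exists2 L, blocker st v L & w \in avail st L.
Proof.
move=> hst /existsNP[L /not_implyP[uL /not_implyP[aL /negP]]].
rewrite -ltnNge => ltL.
have [aL1 vL] : unmatched st L /\ v \notin L.
  split; first by apply: sub_all aL => x; rewrite /= in_cons negb_or => /andP[].
  by apply/negP => /(allP aL); rewrite /= in_cons eqxx.
have ltw : size (avail st L) <= (size (avail ((v, w) :: st) L)).+1.
  rewrite -[X in _ <= X]/(size (w :: avail ((v, w) :: st) L)).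
  apply: uniq_leq_size; first exact: undup_uniq.
  move=> x; rewrite in_cons !mem_avail /= in_cons.
  by case: (x =P w) => //= _ /andP[-> ->].
have hL := hst L uL aL1.
exists L; first by split=> //; rewrite /tight; lia.
apply: contraT => nw; suff: size (avail st L) <= size (avail ((v, w) :: st) L) by lia.
apply: uniq_leq_size; first exact: undup_uniq.
move=> x xa; move: (xa); rewrite !mem_avail /= in_cons negb_or => /andP[-> ->].
by rewrite !andbT; apply: contraNneq nw => <-.
Qed.

Lemma tight_cover st v (ws : seq B) : residual_hall st ->
  (forall w, w \in ws -> exists2 L, blocker st v L & w \in avail st L) ->
  exists2 E, blocker st v E & {subset ws <= avail st E}.
Proof.
move=> hst; elim: ws => [|w ws IH] blocked.
  by exists [::] => //; split => //; rewrite /tight /avail.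
have [E [uE aE vE cE] sE] : exists2 E, blocker st v E & {subset ws <= avail st E}.
  by apply: IH => x xs; apply: blocked; rewrite in_cons xs orbT.
have [L [uL aL vL cL] wL] := blocked w (mem_head _ _).
have availU L1 L2 x : x \in avail st L1 -> x \in avail st (undup (L1 ++ L2)).
  by rewrite !mem_avail has_undup has_cat => /andP[-> ->].
exists (undup (E ++ L)).
  split; first exact: undup_uniq.
  - by rewrite unmatched_undup unmatched_cat aE.
  - by rewrite mem_undup mem_cat negb_or vE.
  - exact: tight_union.
move=> x; rewrite in_cons => /orP[/eqP ->|/sE]; last exact: availU.
by move: wL; rewrite !mem_avail has_undup has_cat orbC => /andP[-> ->].
Qed.

(* If every free neighbour of [v] were blocked, the union of the blocking tight
   sets (again tight) together with [v] would violate the residual condition. *)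
Lemma residual_hall_extend st v : residual_hall st -> v \notin map fst st ->
  exists w, ((w \in N v) && (w \notin map snd st)) /\ residual_hall ((v, w) :: st).
Proof.
move=> hst vn; apply: contrapT => noext.
have blocked w : w \in [seq w <- N v | w \notin map snd st] ->
    exists2 L, blocker st v L & w \in avail st L.
  rewrite mem_filter => /andP[wn wN]; apply: blocked_tight hst _ => hw.
  by apply: noext; exists w; rewrite wN wn.
have [E [uE aE vE cE] sE] := tight_cover hst blocked.
have uvE : uniq (v :: E) by rewrite /= vE.
have avE : unmatched st (v :: E) by rewrite /unmatched /= vn.
have : size (avail st (v :: E)) <= size (avail st E).
  apply: uniq_leq_size; first exact: undup_uniq.
  move=> x; rewrite mem_avail => /andP[xn /hasP[y]]; rewrite in_cons => /orP[/eqP ->|yE] xN.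
    by apply: sE; rewrite mem_filter xn.
  by rewrite mem_avail xn; apply/hasP; exists y.
by have := hst _ uvE avE; rewrite cE /=; lia.
Qed.

Variables (a : nat -> A) (b0 : B).
Hypothesis a_surj : forall v, exists k, a k = v.
Hypothesis hall : forall L, uniq L -> size L <= size (undup (flatten (map N L))).

Definition next_partner st v := epsilon (inhabits b0)
  (fun w => ((w \in N v) && (w \notin map snd st)) /\ residual_hall ((v, w) :: st)).

Lemma next_partnerP st v : residual_hall st -> v \notin map fst st ->
  let w := next_partner st v in
  ((w \in N v) && (w \notin map snd st)) /\ residual_hall ((v, w) :: st).
Proof.
move=> hst vn; exact: (epsilon_spec (inhabits b0) _ (residual_hall_extend hst vn)).
Qed.

Definition extend_matching st v :=
  if v \in map fst st then st else (v, next_partner st v) :: st.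

Fixpoint greedy_matching k :=
  if k is k'.+1 then extend_matching (greedy_matching k') (a k') else [::].

Definition valid_matching st :=
  [/\ residual_hall st, uniq (map snd st) & all (fun p => p.2 \in N p.1) st].

Lemma greedy_matching_valid k : valid_matching (greedy_matching k).
Proof.
elim: k => [|k [hst us es]] /=.
  split=> // L uL _; rewrite /avail (@eq_filter _ _ predT) ?filter_predT //.
  exact: hall.
rewrite /extend_matching; case: ifPn => // vn.
have [/andP[wN wn] hw] := next_partnerP hst vn.
by split => //=; rewrite ?wn ?wN.
Qed.

Lemma greedy_matching_mono k j : k <= j ->
  {subset greedy_matching k <= greedy_matching j}.
Proof.
move/subnK <-; elim: (j - k) => [//|i IH] p /IH.
by rewrite addSn /= /extend_matching; case: ifP => // _ pk; rewrite in_cons pk orbT.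
Qed.

Lemma greedy_matching_dom k : a k \in map fst (greedy_matching k.+1).
Proof. by rewrite /= /extend_matching; case: ifP => // _; rewrite /= mem_head. Qed.

Theorem countable_hall : exists f : A -> B, injective f /\ forall v, f v \in N v.
Proof.
pose matched v w := exists k, (v, w) \in greedy_matching k.
pose f v := epsilon (inhabits b0) (matched v).
have fP v : matched v (f v).
  apply: epsilon_spec; have [k <-] := a_surj v.
  have /mapP[[x w] xin ex] := greedy_matching_dom k.
  by exists w, k.+1; rewrite ex.
exists f; split => [v v' e|v].
  have [k hk] := fP v; have [k' hk'] := fP v'.
  have [_ us _] := greedy_matching_valid (maxn k k').
  apply: (uniq_map_snd_inj us (greedy_matching_mono (leq_maxl k k') hk)).
  by rewrite e; exact: greedy_matching_mono (leq_maxr k k') _ hk'.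
have [k hk] := fP v; have [_ _ es] := greedy_matching_valid k.
exact: (allP es _ hk).
Qed.

End CountableHall.

(** * Amenable groups have Følner sets *)

Definition sumR (I : Type) (r : seq I) (F : I -> R) : R :=
  foldr (fun i acc => Rplus (F i) acc) R0 r.

Lemma sumR_cat (I : Type) (r1 r2 : seq I) F :
  sumR (r1 ++ r2) F = Rplus (sumR r1 F) (sumR r2 F).
Proof. by elim: r1 => [|i r IH] /=; rewrite ?Rplus_0_l // IH Rplus_assoc. Qed.

Lemma sumR_map (I J : Type) (r : seq I) (h : I -> J) F :
  sumR (map h r) F = sumR r (fun i => F (h i)).
Proof. by elim: r => [|i r IH] //=; rewrite IH. Qed.

Section Mean.
Variables (T : Type) (mu : (T -> Prop) -> R).
Hypothesis mu1 : mu (fun _ => True) = R1.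
Hypothesis mu_ge0 : forall A, Rle R0 (mu A).
Hypothesis muU : forall A B : T -> Prop, (forall x, A x -> B x -> False) ->
  mu (fun x => A x \/ B x) = Rplus (mu A) (mu B).

Lemma mean_ext A B : (forall y, A y <-> B y) -> mu A = mu B.
Proof. by move=> AB; congr mu; apply: funext => y; apply: propext. Qed.

Lemma mean0 : mu (fun _ => False) = R0.
Proof.
have := muU (A := fun _ => False) (B := fun _ => False) (fun _ h _ => h).
by rewrite (@mean_ext _ (fun _ => False)) => [h|y]; [lra|tauto].
Qed.

Lemma mean_le1 A : Rle (mu A) R1.
Proof.
have := muU (A := A) (B := fun x => ~ A x) (fun _ h h' => h' h).
rewrite (@mean_ext _ (fun _ => True)) => [|y]; last by split => // _; apply: lem.
by have := mu_ge0 (fun x => ~ A x); lra.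
Qed.

Lemma mean_bigU (I : eqType) (r : seq I) (P : I -> T -> Prop) : uniq r ->
  (forall i j y, i \in r -> j \in r -> i != j -> P i y -> P j y -> False) ->
  mu (fun y => exists2 i, i \in r & P i y) = sumR r (fun i => mu (P i)).
Proof.
elim: r => [|i r IH] /=.
  by move=> _ _; rewrite -mean0; apply: mean_ext => y; split => // [[]].
move=> /andP[ir ur] disj.
rewrite -IH //; last by move=> i' j y i'r jr; apply: disj; rewrite in_cons ?i'r ?jr orbT.
rewrite -muU; last first.
  move=> y Pi [j jr Pj]; apply: (disj i j y) => //; rewrite ?in_cons ?eqxx ?jr ?orbT //.
  by apply: contraNneq ir => ->.
apply: mean_ext => y; split.
  by case=> j; rewrite in_cons => /orP[/eqP ->|jr] Pj; [left|right; exists j].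
by case=> [Pi|[j jr Pj]]; [exists i; rewrite ?mem_head|exists j; rewrite ?in_cons ?jr ?orbT].
Qed.

End Mean.

Lemma amenable_right_mean (G : group) : amenable G ->
  exists mu : (G -> Prop) -> R, [/\ mu (fun _ => True) = R1,
    forall A, Rle R0 (mu A),
    forall A B : G -> Prop, (forall x, A x -> B x -> False) ->
      mu (fun x => A x \/ B x) = Rplus (mu A) (mu B) &
    forall (g : G) (A : G -> Prop), mu (fun y => A (y *g g)) = mu A].
Proof.
case=> m [m1 [m_ge0 [mU mJ]]].
exists (fun A => m (fun x => A (ginv G x))); split => // [A B AB|g A].
  by apply: mU => x; apply: AB.
rewrite -(mJ g (fun z => A (ginv G z))).
by apply: mean_ext => x; rewrite ginvM ginvK.
Qed.

(* For each [b], the sets [moved_by x b] (x in X) partition [G]; their right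
   translates by [x] are pairwise disjoint by injectivity of [f], so a
   right-invariant mean would give their union mass 2. *)
Lemma amenable_no_doubling_injection (G : group) (X : seq G) (f : G * bool -> G) :
  amenable G -> injective f -> (forall p, f p \in [seq p.1 *g x | x <- X]) -> False.
Proof.
move=> /amenable_right_mean[mu [mu1 mu_ge0 muU muJ]] finj fX.
pose Xu := undup X.
pose moved_by x b g := f (g, b) = g *g x.
have cover b : sumR Xu (fun x => mu (moved_by x b)) = R1.
  rewrite -(mean_bigU muU (undup_uniq X)); last first.
    by move=> x x' g _ _ /eqP xx'; rewrite /moved_by => -> /gmulIl.
  rewrite -mu1; apply: mean_ext => g; split => // _.
  by have /mapP[x xX ex] := fX (g, b); exists x; rewrite ?mem_undup.
pose idx := [seq (x, true) | x <- Xu] ++ [seq (x, false) | x <- Xu].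
have uidx : uniq idx.
  rewrite cat_uniq !map_inj_uniq ?undup_uniq // => [|x y []//|x y []//].
  by rewrite andbT; apply/hasPn => p /mapP[x _ ->]; apply/negP => /mapP[].
pose image p y := moved_by p.1 p.2 (y *g ginv G p.1).
have images_disjoint : mu (fun y => exists2 p, p \in idx & image p y) =
    sumR idx (fun p => mu (moved_by p.1 p.2)).
  rewrite (mean_bigU muU uidx) => [|[x b] [x' b'] y _ _ ne].
    by congr sumR; apply: funext => p; apply: muJ.
  rewrite /image /moved_by /= !gmulVKr => e1 e2.
  case: (finj _ _ (etrans e1 (esym e2))) => /gmulIl ex eb.
  by move/eqP: ne; apply; rewrite -(ginvK x) ex ginvK eb.
have := mean_le1 mu1 mu_ge0 muU (fun y => exists2 p, p \in idx & image p y).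
by rewrite images_disjoint sumR_cat !sumR_map /= !cover; lra.
Qed.

Definition mulseq (G : group) (F X : seq G) : seq G := undup [seq f *g x | f <- F, x <- X].

(* [L] has at most two pairs over each [g] in [F := map fst L], and its set of
   neighbours is exactly [F X]. *)
Lemma hall_of_expansion (G : group) (X : seq G) :
  (forall F : seq G, uniq F -> F != [::] -> 2 * size F < size (mulseq F X)) ->
  forall L : seq (G * bool), uniq L ->
    size L <= size (undup (flatten (map (fun p => [seq p.1 *g x | x <- X]) L))).
Proof.
move=> expand [//|p0 L0] uL; set L := p0 :: L0 in uL *.
pose F := undup (map fst L).
have nF : F != [::].
  by apply: contraTneq (mem_head p0.1 (map fst L0)) => F0; rewrite -mem_undup -/F F0.
have sLF : size L <= 2 * size F.
  have sub : {subset L <= [seq (f, b) | f <- F, b <- [:: true; false]]}.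
    move=> -[f b] pin; apply/allpairsP; exists (f, b); split => //=.
      by rewrite mem_undup; apply/mapP; exists (f, b).
    by case: b {pin}.
  by rewrite mulnC -(size_allpairs pair F [:: true; false]) uniq_leq_size.
suff -> : size (undup (flatten (map (fun p => [seq p.1 *g x | x <- X]) L))) = size (mulseq F X).
  by apply: leq_trans sLF (ltnW (expand F (undup_uniq _) nF)).
apply: perm_size; apply: uniq_perm; try exact: undup_uniq.
move=> y; rewrite !mem_undup; apply/flatten_mapP/allpairsP => [[[f b] pL /mapP[x xX ->]]|].
  by exists (f, x); split => //=; rewrite mem_undup; apply/mapP; exists (f, b).
case=> -[f x] [/= + xX ->]; rewrite mem_undup => /mapP[[f' b] pL /= ->].
by exists (f', b) => //; apply: map_f.
Qed.

Lemma amenable_folner (G : group) : amenable G ->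
  (exists e : nat -> G, forall g, exists k, e k = g) ->
  forall X : seq G, exists F : seq G, [/\ uniq F, F != [::] & size (mulseq F X) <= 2 * size F].
Proof.
move=> Gam [e e_surj] X; apply: contrapT => noF.
have expand F : uniq F -> F != [::] -> 2 * size F < size (mulseq F X).
  by move=> uF nF; rewrite ltnNge; apply: contra_notN noF => le; exists F.
have e2_surj p : exists k, (e k./2, odd k) = p.
  case: p => g b; have [k <-] := e_surj g.
  by exists (b + k.*2); rewrite half_bit_double oddD odd_double addbF oddb.
have [f [finj fX]] := countable_hall (gone G) e2_surj (hall_of_expansion expand).
exact: amenable_no_doubling_injection Gam finj fX.
Qed.

(** * Følner sets under homomorphisms *)

Lemma count_sum (T : Type) (a : pred T) (r : seq T) : count a r = \sum_(x <- r) a x.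
Proof. by rewrite -sum1_count big_mkcond. Qed.

Lemma sum_count_swap (I T : Type) (P : I -> pred T) (ls : seq I) (ts : seq T) :
  \sum_(l <- ls) count (P l) ts = \sum_(t <- ts) count (P^~ t) ls.
Proof.
under eq_bigr do rewrite count_sum; rewrite exchange_big.
by under [RHS]eq_bigr do rewrite count_sum.
Qed.

Lemma sum_count_fibres (T S : eqType) (h : T -> S) (r : seq T) :
  \sum_(s <- undup (map h r)) count (fun y => h y == s) r = size r.
Proof.
rewrite -sum_count_swap -count_predT count_sum; apply: eq_big_seq => y yr.
rewrite (eq_count (a2 := pred1 (h y))) => [|s]; last exact: eq_sym.
by rewrite count_uniq_mem ?undup_uniq // mem_undup map_f.
Qed.

Lemma count_iota_leq (c N : nat) : count (fun l => l <= c) (iota 1 N) = minn c N.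
Proof.
elim: N => [|N IH]; first by rewrite minn0.
by rewrite -[N.+1]addn1 iotaD count_cat IH /=; lia.
Qed.

Lemma sum_size_le (I : Type) (T : eqType) (ls : seq I) (S : I -> seq T) (ts : seq T)
    (c : T -> nat) :
  (forall l, uniq (S l)) -> (forall l, {subset S l <= ts}) ->
  (forall t, count (fun l => t \in S l) ls <= c t) ->
  \sum_(l <- ls) size (S l) <= \sum_(t <- ts) c t.
Proof.
move=> uS sS cS; apply: (@leq_trans (\sum_(l <- ls) count (mem (S l)) ts)).
  apply: leq_sum => l _; rewrite -size_filter uniq_leq_size // => t tS.
  by rewrite mem_filter (sS l) // andbT.
by rewrite sum_count_swap; apply: leq_sum => t _; apply: cS.
Qed.

Lemma exists_le_mul_sum (I : eqType) (r : seq I) (k : nat) (a b : I -> nat) :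
  \sum_(i <- r) a i <= k * \sum_(i <- r) b i -> 0 < \sum_(i <- r) b i ->
  exists2 i, i \in r & 0 < b i /\ a i <= k * b i.
Proof.
elim: r => [|i r IH]; rewrite ?big_nil ?big_cons // => le pos.
have [/andP[bi ai]|] := boolP ((0 < b i) && (a i <= k * b i)).
  by exists i; rewrite ?mem_head.
rewrite negb_and -ltnNge => bad.
have [j jr ok] : exists2 j, j \in r & 0 < b j /\ a j <= k * b j.
  by apply: IH; case/orP: bad; nia.
by exists j; rewrite // in_cons jr orbT.
Qed.

Section FolnerImage.
Variables (G Z : group) (ph : G -> Z).
Hypothesis phM : forall x y, ph (x *g y) = ph x *g ph y.
Variables (F X : seq G).
Hypothesis uF : uniq F.

Definition level l := [seq s <- undup (map ph F) | l <= count (fun f => ph f == s) F].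

Lemma sum_size_level : \sum_(l <- iota 1 (size F)) size (level l) = size F.
Proof.
under eq_bigr do rewrite size_filter.
rewrite sum_count_swap -[RHS](sum_count_fibres ph); apply: eq_bigr => s _.
by rewrite count_iota_leq; apply/minn_idPl/count_size.
Qed.

Lemma level_mul_fibre l t : t \in mulseq (level l) (map ph X) ->
  l <= count (fun y => ph y == t) (mulseq F X).
Proof.
rewrite mem_undup => /allpairsP[[s u] [/= sl /mapP[x xX ->] ->]].
move: sl; rewrite mem_filter => /andP[ls _]; apply: leq_trans ls _.
rewrite -!size_filter -(size_map (gmul G ^~ x)); apply: uniq_leq_size.
  by rewrite map_inj_in_uniq ?filter_uniq // => f1 f2 _ _; apply: gmulIr.
move=> y /mapP[f]; rewrite mem_filter => /andP[/eqP ef fF] ->.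
rewrite mem_filter mem_undup phM ef eqxx /=.
by apply/allpairsP; exists (f, x).
Qed.

Lemma sum_size_level_mul :
  \sum_(l <- iota 1 (size F)) size (mulseq (level l) (map ph X)) <= size (mulseq F X).
Proof.
rewrite -[X in _ <= X](sum_count_fibres ph).
apply: sum_size_le => [l|l t|t]; first exact: undup_uniq.
  rewrite /mulseq !mem_undup => /allpairsP[[s u] [/= sl /mapP[x xX ->] ->]].
  move: sl; rewrite mem_filter mem_undup => /andP[_ /mapP[f fF ->]].
  by rewrite -phM; apply/map_f; rewrite mem_undup; apply/allpairsP; exists (f, x).
rewrite (leq_trans _ (geq_minl _ (size F))) // -count_iota_leq.
by apply: sub_count => l; apply: level_mul_fibre.
Qed.

Lemma folner_image : F != [::] -> size (mulseq F X) <= 2 * size F ->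
  exists S : seq Z, [/\ uniq S, S != [::], size S <= size F &
    size (mulseq S (map ph X)) <= 2 * size S].
Proof.
move=> nF hF.
have [||l _ [pos hl]] := @exists_le_mul_sum _ (iota 1 (size F)) 2
  (fun l => size (mulseq (level l) (map ph X))) (fun l => size (level l)).
- by rewrite sum_size_level (leq_trans sum_size_level_mul hF).
- by rewrite sum_size_level lt0n size_eq0.
exists (level l); split => //; first exact/filter_uniq/undup_uniq.
  by rewrite -size_eq0 -lt0n.
rewrite size_filter (leq_trans (count_size _ _)) //.
by rewrite (leq_trans (size_undup _)) ?size_map.
Qed.

End FolnerImage.

Theorem variety_folner_bound (V : laws) :
  (forall G : group, in_variety V G -> amenable G) ->
  exists g : nat -> nat, forall Z : group, in_variety V Z -> forall U : seq Z,
    exists F : seq Z, [/\ uniq F, F != [::], size F <= g (size U) &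
      size (mulseq F U) <= 2 * size F].
Proof.
move=> Vamen; pose gens n := map (@relfree_gen V) (iota 0 n).
have Ramen := Vamen _ (@relfree_in_variety V).
have [Fs Fs_folner] := choice (fun n => amenable_folner Ramen (relfree_countable V) (gens n)).
exists (fun n => size (Fs n)) => Z HZ U.
pose ph := @relfree_lift V Z (nth (gone Z) U).
have [uF nF hF] := Fs_folner (size U).
have [S [uS nS sS hS]] := folner_image (relfree_liftM HZ (nth (gone Z) U)) uF nF hF.
have ph_gens : map ph (gens (size U)) = U.
  by rewrite -map_comp (eq_map (relfree_lift_gen HZ _)); apply: mkseq_nth.
by rewrite -/ph ph_gens in hS; exists S.
Qed.

Lemma InP (T : eqType) (x : T) (s : seq T) : reflect (List.In x s) (x \in s).
Proof.
elim: s => [|y s IH] /=; first by constructor.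
rewrite in_cons; apply: (iffP orP) => [[/eqP->|/IH]|[->|/IH]]; by [left|right].
Qed.

Lemma uniq_NoDup (T : eqType) (s : seq T) : uniq s -> List.NoDup s.
Proof.
elim: s => [|x s IH] /=; first by constructor.
by case/andP=> /InP xs us; constructor; last exact: IH.
Qed.

Lemma size_length (T : Type) (s : seq T) : size s = List.length s.
Proof. by elim: s => //= x s ->. Qed.

Lemma In_mulseq (G : group) (F U : seq G) x :
  List.In x (mulseq F U) <-> exists f u, List.In f F /\ List.In u U /\ x = f *g u.
Proof.
split => [/InP|[f [u [/InP fF [/InP uU ->]]]]].
  by rewrite mem_undup => /allpairsP[[f u] [/= /InP fF /InP uU ->]]; exists f, u.
by apply/InP; rewrite mem_undup; apply/allpairsP; exists (f, u).
Qed.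

End VarietyFolner.

Import VarietyFolner.

Theorem lemma3p2 (V : laws)
  (Hamen : forall G : group, in_variety V G -> amenable G)
  (Hord : forall X : Type, relfree_right_orderable V X) :
  exists g : nat -> nat,
    forall Z : group, in_variety V Z ->
    forall (n : nat) (U : list Z), NoDup U -> length U = n ->
    exists F : list Z,
      F <> nil /\ NoDup F /\ (length F <= g n)%nat /\
      exists FU : list Z,
        NoDup FU /\
        (forall x, In x FU <-> exists f u, In f F /\ In u U /\ x = gmul Z f u) /\
        (length FU <= 2 * length F)%nat.
Proof.
have [g folnerU] := variety_folner_bound Hamen.
exists g => Z HZ _ U _ <-.
have [F [uF nF sF hF]] := folnerU Z HZ U.
exists F; split; [by case: F nF {uF sF hF} | split; first exact: uniq_NoDup].
split; first by apply/ssrnat.leP; rewrite -!size_length.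
exists (mulseq F U); split; first exact/uniq_NoDup/seq.undup_uniq.
split; first exact: In_mulseq.
by apply/ssrnat.leP; rewrite -!size_length.
Qed.
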